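(* For every MSyDS $\mathcal{S}$ with node set $V$ there is a single-layer SyDS with node set $V$ whose phase space is identical to the phase space of $\mathcal{S}$.
   Context: A multilayer synchronous dynamical system (MSyDS) $\mathcal{S}$ over $\mathbb{B}=\{0,1\}$ with $k\ge 1$ layers consists of: a finite node set $V$; undirected simple graphs $G_i=(V,E_i)$, $1\le i\le k$ (all layers share the node set $V$); for each layer $i$ and node $v$ a local function $f_{i,v}$ (an arbitrary Boolean function) with output in $\mathbb{B}$ whose inputs are the states of the nodes in the closed neighborhood of $v$ in $G_i$ ($v$ and its neighbors in $G_i$); and for each node $v$ a master function $\psi_v:\mathbb{B}^k\to\mathbb{B}$. A configuration is a map $\mathcal{C}:V\to\mathbb{B}$; its successor is $\mathcal{C}'$ with $\mathcal{C}'(v)=\psi_v(f_{1,v}(\mathcal{C}),\dots,f_{k,v}(\mathcal{C}))$ for all $v$ (synchronous update), where $f_{i,v}(\mathcal{C})$ is $f_{i,v}$ evaluated on the states in $\mathcal{C}$ of the closed neighborhood of $v$ in $G_i$. The phase space is the directed graph on all configurations with an arc from each configuration to its successor. A single-layer synchronous dynamical system (SyDS) over $\mathbb{B}$ consists of one undirected graph $G=(V,E)$ and, for each $v\in V$, a Boolean local function $f_v$ of the states of the closed neighborhood of $v$ in $G$; the successor of $\mathcal{C}$ is $\mathcal{C}'$ with $\mathcal{C}'(v)=f_v(\mathcal{C})$ for all $v$, and its phase space is defined in the same way. *)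

From mathcomp Require Import all_boot.
Set Implicit Arguments. Unset Strict Implicit. Unset Printing Implicit Defensive.

Definition config (V : finType) := {ffun V -> bool}.

Definition simple_graph (V : finType) (e : rel V) : Prop :=
  symmetric e /\ irreflexive e.

Definition closed_nbhd (V : finType) (e : rel V) (v : V) : pred V :=
  fun u => (u == v) || e v u.

Definition local_to (V : finType) (e : rel V) (v : V) (f : config V -> bool) : Prop :=
  forall C1 C2 : config V,
    (forall u, closed_nbhd e v u -> C1 u = C2 u) -> f C1 = f C2.

Record MSyDS (V : finType) (k : nat) := {
  ms_graph  : 'I_k -> rel V;
  ms_local  : 'I_k -> V -> config V -> bool;
  ms_master : V -> {ffun 'I_k -> bool} -> bool;
  ms_graph_simple : forall i, simple_graph (ms_graph i);
  ms_local_ok : forall i v, local_to (ms_graph i) v (ms_local i v)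
}.

Definition ms_succ (V : finType) (k : nat) (S : MSyDS V k) (C : config V)
  : config V :=
  [ffun v => ms_master S v [ffun i => ms_local S i v C]].

Record SyDS (V : finType) := {
  sy_graph : rel V;
  sy_local : V -> config V -> bool;
  sy_graph_simple : simple_graph sy_graph;
  sy_local_ok : forall v, local_to sy_graph v (sy_local v)
}.

Definition sy_succ (V : finType) (S : SyDS V) (C : config V) : config V :=
  [ffun v => sy_local S v C].

Definition ms_phase_space (V : finType) (k : nat) (S : MSyDS V k)
  : rel (config V) := fun C D => D == ms_succ S C.

Definition sy_phase_space (V : finType) (S : SyDS V) : rel (config V) :=
  fun C D => D == sy_succ S C.

From mathcomp Require Import all_boot.
Set Implicit Arguments. Unset Strict Implicit. Unset Printing Implicit Defensive.

(* Flatten the layers: take the union of the k graphs as the single graph,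
   and as local function at v the master function applied to the k layer
   functions.  Each layer function only reads N[v] in its own layer, which is
   contained in N[v] in the union, so the composite is local to the union and
   computes the same successor as the multilayer system. *)

Section Flatten.
Variable V : finType.

Definition union_graph (I : finType) (e : I -> rel V) : rel V :=
  fun u w => [exists i, e i u w].

Lemma union_graph_simple (I : finType) (e : I -> rel V) :
  (forall i, simple_graph (e i)) -> simple_graph (union_graph e).
Proof.
move=> e_simple; split.
- move=> u w; apply/existsP/existsP => -[i eiuw]; exists i;
    by have [e_sym _] := e_simple i; rewrite e_sym.
- move=> u; apply/existsP => -[i eiuu].
  by have [_ e_irr] := e_simple i; rewrite e_irr in eiuu.
Qed.

Lemma union_graph_sub (I : finType) (e : I -> rel V) (i : I) :
  subrel (e i) (union_graph e).
Proof. by move=> u w eiuw; apply/existsP; exists i. Qed.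

Lemma local_to_subrel (e e' : rel V) (v : V) (f : config V -> bool) :
  subrel e e' -> local_to e v f -> local_to e' v f.
Proof.
move=> sub_ee' f_loc C1 C2 eqC; apply: f_loc => u /orP[uv | evu]; apply: eqC.
  by rewrite /closed_nbhd uv.
by rewrite /closed_nbhd sub_ee' ?orbT.
Qed.

Lemma local_to_comp (I : finType) (e : rel V) (v : V)
    (f : I -> config V -> bool) (g : {ffun I -> bool} -> bool) :
  (forall i, local_to e v (f i)) -> local_to e v (fun C => g [ffun i => f i C]).
Proof.
move=> f_loc C1 C2 eqC; congr g; apply/ffunP => i; rewrite !ffunE.
exact: f_loc.
Qed.

Variables (k : nat) (S : MSyDS V k).

Definition flatten_local (v : V) (C : config V) : bool :=
  ms_master S v [ffun i => ms_local S i v C].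

Lemma flatten_local_ok (v : V) :
  local_to (union_graph (ms_graph S)) v (flatten_local v).
Proof.
apply: local_to_comp => i.
apply: (@local_to_subrel (ms_graph S i)); last exact: ms_local_ok.
exact: union_graph_sub.
Qed.

Definition flatten : SyDS V :=
  Build_SyDS (union_graph_simple (ms_graph_simple S)) flatten_local_ok.

Lemma sy_succ_flatten : sy_succ flatten =1 ms_succ S.
Proof. by move=> C; apply/ffunP => v; rewrite !ffunE. Qed.

End Flatten.

Theorem proposition6p1 (V : finType) (k : nat) (Hk : 1 <= k) (S : MSyDS V k) :
  exists T : SyDS V, ms_phase_space S =2 sy_phase_space T.
Proof.
by exists (flatten S) => C D; rewrite /ms_phase_space /sy_phase_space sy_succ_flatten.
Qed.
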